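(* Let $X$ be a Banach ideal space over a $\sigma$-finite measure space $(\Omega,\Sigma,\mu)$ with the semi-Fatou property such that $\operatorname{supp}(X_a)=\operatorname{supp}(X)$. Then $X$ contains a lattice isometric copy of $\ell_\infty$ if and only if there exists $f\in X$ with $\|f\|_X=\operatorname{dist}_X(f,X_a)=1$.
   Context: A Banach ideal space $X$ on a complete $\sigma$-finite measure space $(\Omega,\Sigma,\mu)$ is a Banach space $X\subset L_0(\Omega,\Sigma,\mu)$ (real measurable functions modulo a.e. equality) such that if $|f|\le|g|$ a.e., $f\in L_0$ and $g\in X$, then $f\in X$ and $\|f\|_X\le\|g\|_X$. An element $x\in X$ is order continuous if for every sequence $0\le x_n\le|x|$ with $x_n\downarrow 0$ (decreasing with infimum $0$) one has $\|x_n\|_X\to0$; $X_a$ denotes the closed ideal of all order continuous elements of $X$. The support $\operatorname{supp}(Y)$ of a subspace $Y\subset L_0$ is the smallest measurable set $A$ (up to null sets) with $f\chi_{\Omega\setminus A}=0$ for all $f\in Y$. $X$ has the semi-Fatou property if $0\le x_n\uparrow x$ with $x_n,x\in X$ implies $\|x_n\|_X\to\|x\|_X$. $\operatorname{dist}_X(f,M)=\inf\{\|f-m\|_X: m\in M\}$. ''$X$ contains a lattice isometric copy of $\ell_\infty$'' means there is a linear isometric embedding $T:\ell_\infty\to X$ which is a lattice homomorphism (preserves the lattice operations). *)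

From HB Require Import structures.
From mathcomp Require Import all_boot all_order all_algebra.
From mathcomp Require Import all_classical all_reals all_analysis.
Set Implicit Arguments. Unset Strict Implicit. Unset Printing Implicit Defensive.
Import Order.TTheory GRing.Theory Num.Theory.
Import numFieldNormedType.Exports.
Local Open Scope classical_set_scope.
Local Open Scope ring_scope.

Section BIS.
Context (d : measure_display) (T : measurableType d) (R : realType)
  (mu : {measure set T -> \bar R}).

(* Elements of L_0 are represented by measurable functions T -> R;
   all equalities/inequalities between them are understood a.e. *)
Definition L0 (f : T -> R) : Prop := measurable_fun setT f.

Definition banach_ideal_space (X : set (T -> R)) (N : (T -> R) -> R) : Prop :=
  [/\
      (forall f, X f -> L0 f),
      X (fun _ => 0) /\
      (forall f g, X f -> X g -> X (f \+ g)) /\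
      (forall (c : R) f, X f -> X (fun x => c * f x)),
      (forall f, X f -> 0 <= N f) /\
      (forall f g, X f -> X g -> N (f \+ g) <= N f + N g) /\
      (forall (c : R) f, X f -> N (fun x => c * f x) = `|c| * N f) /\
      (forall f, X f -> N f = 0 -> {ae mu, forall x, f x = 0}),
      (forall u : nat -> T -> R, (forall n, X (u n)) ->
        (forall e : R, 0 < e -> exists M : nat, forall m n : nat,
            (M <= m)%N -> (M <= n)%N -> N (u m \- u n) < e) ->
        exists2 g, X g & (fun n => N (u n \- g)) @ \oo --> (0 : R)) &
      (forall f g, L0 f -> X g -> {ae mu, forall x, `|f x| <= `|g x|} ->
         X f /\ N f <= N g)].

Definition order_continuous (X : set (T -> R)) (N : (T -> R) -> R)
  (x : T -> R) : Prop :=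
  X x /\
  forall u : nat -> T -> R, (forall n, L0 (u n)) ->
    {ae mu, forall t, forall n, 0 <= u n t <= `|x t|} ->
    {ae mu, forall t, forall n, u n.+1 t <= u n t} ->
    {ae mu, forall t, (fun n => u n t) @ \oo --> (0 : R)} ->
    (fun n => N (u n)) @ \oo --> (0 : R).

Definition Xa (X : set (T -> R)) (N : (T -> R) -> R) : set (T -> R) :=
  [set x | order_continuous X N x].

Definition is_support (Y : set (T -> R)) (A : set T) : Prop :=
  [/\ measurable A,
      (forall f, Y f -> {ae mu, forall x, ~ A x -> f x = 0}) &
      (forall B, measurable B ->
         (forall f, Y f -> {ae mu, forall x, ~ B x -> f x = 0}) ->
         mu (A `\` B) = 0%E)].

Definition same_support (Y1 Y2 : set (T -> R)) : Prop :=
  exists A, is_support Y1 A /\ is_support Y2 A.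

Definition semi_fatou (X : set (T -> R)) (N : (T -> R) -> R) : Prop :=
  forall (u : nat -> T -> R) (x : T -> R), (forall n, X (u n)) -> X x ->
    {ae mu, forall t, forall n, 0 <= u n t <= u n.+1 t} ->
    {ae mu, forall t, (fun n => u n t) @ \oo --> x t} ->
    (fun n => N (u n)) @ \oo --> N x.

Definition distX (N : (T -> R) -> R) (f : T -> R) (M : set (T -> R)) : R :=
  inf [set N (f \- m) | m in M].

Definition linf : set (nat -> R) := [set a | exists C : R, forall n, `|a n| <= C].
Definition linf_norm (a : nat -> R) : R := sup [set `|a n| | n in [set: nat]].

Definition lattice_isometric_embedding (X : set (T -> R)) (N : (T -> R) -> R)
  (J : (nat -> R) -> T -> R) : Prop :=
  [/\ (forall a, linf a -> X (J a)),
      (forall (c : R) a b, linf a -> linf b ->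
         {ae mu, forall t, J (fun n => c * a n + b n) t = c * J a t + J b t}),
      (forall a, linf a -> N (J a) = linf_norm a),
      (forall a b, linf a -> linf b ->
         {ae mu, forall t, J (fun n => Num.max (a n) (b n)) t = Num.max (J a t) (J b t)}) &
      (forall a b, linf a -> linf b ->
         {ae mu, forall t, J (fun n => Num.min (a n) (b n)) t = Num.min (J a t) (J b t)})].

Definition contains_lattice_isometric_linf (X : set (T -> R)) (N : (T -> R) -> R) : Prop :=
  exists J, lattice_isometric_embedding X N J.

End BIS.

(* If J is a lattice isometry of l_infinity into X, then f = J 1 has norm 1 and
   dominates the disjoint functions e_k = J (unit_seq k) of norm 1.  An order
   continuous g is negligible, in norm, on the supports of e_k for all large k,
   so N (f - g) >= N e_k - o(1) = 1.
   Conversely let N f = dist (f, X_a) = 1.  Using sigma-finiteness and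
   supp X_a = supp X, the set {f <> 0} is exhausted by countably many sets B on
   which |f| 1_B is order continuous, and removing such a B from the support of
   f does not lower its norm.  The semi-Fatou property then cuts f into disjoint
   blocks P_i with N (|f| 1_(P_i)) -> 1, and a |-> sum_i a_(k i) |f| 1_(P_i), in
   which every coordinate is repeated on infinitely many blocks, is a lattice
   isometry of l_infinity into X. *)

From HB Require Import structures.
From mathcomp Require Import all_boot all_order all_algebra.
From mathcomp Require Import all_classical all_reals all_analysis.
From mathcomp Require Import measurable_realfun.
From mathcomp Require Import lra zify.
Import Order.TTheory GRing.Theory Num.Theory.
Import numFieldNormedType.Exports.
Local Open Scope classical_set_scope.
Local Open Scope ring_scope.

Lemma squeeze0_cvgr {R : realType} {u v : nat -> R} :
  (forall n, 0 <= u n <= v n) -> v @ \oo --> 0 -> u @ \oo --> 0.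
Proof.
move=> uv v0; apply: (@squeeze_cvgr _ _ _ _ (fun=> 0) v) => //; last exact: cvg_cst.
by apply: nearW.
Qed.

Lemma indic_in1 {T : Type} {R : realType} (A : set T) t : A t -> \1_A t = 1 :> R.
Proof. by move=> At; rewrite indicE mem_set. Qed.

Lemma indic_notin0 {T : Type} {R : realType} (A : set T) t : ~ A t -> \1_A t = 0 :> R.
Proof. by move=> At; rewrite indicE memNset. Qed.

Section MeasurableSets.
Context {d : measure_display} {T : measurableType d} {R : realType}.
Implicit Types f g : T -> R.

Lemma measurable_fun_normr {f} :
  measurable_fun setT f -> measurable_fun setT (fun t => `|f t|).
Proof. by move=> mf; apply: measurableT_comp => //; exact: normr_measurable. Qed.

Lemma measurable_fun_scale (c : R) {f} :
  measurable_fun setT f -> measurable_fun setT (fun t => c * f t).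
Proof. by move=> mf; apply: measurable_funM => //; exact: measurable_cst. Qed.

Lemma measurable_gt0 {f} : measurable_fun setT f -> measurable [set t | 0 < f t].
Proof.
move=> mf; have := mf measurableT _ (measurable_itv `]0, +oo[).
by rewrite setTI; congr measurable; apply/seteqP; split => t /=; rewrite in_itv /= andbT.
Qed.

Lemma measurable_le {f g} : measurable_fun setT f -> measurable_fun setT g ->
  measurable [set t | f t <= g t].
Proof.
move=> mf mg; have := measurable_funB mg mf measurableT (measurable_itv `[0, +oo[).
by rewrite setTI; congr measurable; apply/seteqP; split => t /=;
  rewrite in_itv /= andbT subr_ge0.
Qed.

End MeasurableSets.

Section AbsOn.
Context {T : Type} {R : realType}.
Implicit Types (B : set T) (f : T -> R).

Definition abs_on B f : T -> R := fun t => \1_B t * `|f t|.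

Lemma abs_on_in B f t : B t -> abs_on B f t = `|f t|.
Proof. by move=> Bt; rewrite /abs_on indic_in1 // mul1r. Qed.

Lemma abs_on_notin B f t : ~ B t -> abs_on B f t = 0.
Proof. by move=> Bt; rewrite /abs_on indic_notin0 // mul0r. Qed.

Lemma abs_on_ge0 B f t : 0 <= abs_on B f t.
Proof. by rewrite /abs_on mulr_ge0. Qed.

Lemma abs_on_le B f t : abs_on B f t <= `|f t|.
Proof.
by have [Bt|Bt] := pselect (B t); [rewrite abs_on_in | rewrite abs_on_notin].
Qed.

Lemma normr_abs_on_le B f t : `|abs_on B f t| <= `|f t|.
Proof. by rewrite ger0_norm ?abs_on_ge0 ?abs_on_le. Qed.

End AbsOn.

Lemma measurable_abs_on {d} {T : measurableType d} {R : realType}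
    {B : set T} {f : T -> R} :
  measurable B -> measurable_fun setT f -> measurable_fun setT (abs_on B f).
Proof.
move=> mB mf; apply: measurable_funM; first exact: measurable_indic.
exact: measurable_fun_normr.
Qed.

Section BanachIdealSpace.
Context {d : measure_display} {T : measurableType d} {R : realType}
  {mu : {measure set T -> \bar R}} {X : set (T -> R)} {N : (T -> R) -> R}.
Hypothesis hX : banach_ideal_space mu X N.
Implicit Types (f g : T -> R).

Lemma bis_measurable {f} : X f -> measurable_fun setT f.
Proof. by case: hX => h _ _ _ _; exact: h. Qed.

Lemma bis_mem0 : X (fun _ => 0).
Proof. by case: hX => _ [h _] _ _ _. Qed.

Lemma bis_memD {f g} : X f -> X g -> X (f \+ g).
Proof. by case: hX => _ [_ [h _]] _ _ _; exact: h. Qed.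

Lemma bis_memZ (c : R) {f} : X f -> X (fun t => c * f t).
Proof. by case: hX => _ [_ [_ h]] _ _ _; exact: h. Qed.

Lemma bis_memB {f g} : X f -> X g -> X (f \- g).
Proof.
move=> Xf Xg; have := bis_memD Xf (bis_memZ (-1) Xg).
by congr X; apply/funext => t /=; rewrite mulN1r.
Qed.

Lemma bis_norm_ge0 {f} : X f -> 0 <= N f.
Proof. by case: hX => _ _ [h _] _ _; exact: h. Qed.

Lemma bis_normD {f g} : X f -> X g -> N (f \+ g) <= N f + N g.
Proof. by case: hX => _ _ [_ [h _]] _ _; exact: h. Qed.

Lemma bis_normZ (c : R) {f} : X f -> N (fun t => c * f t) = `|c| * N f.
Proof. by case: hX => _ _ [_ [_ [h _]]] _ _; exact: h. Qed.

Lemma bis_norm0 : N (fun _ => 0) = 0.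
Proof. by have := bis_normZ 0 bis_mem0; rewrite normr0 !mul0r. Qed.

Lemma bis_ideal_ae {f g} : measurable_fun setT f -> X g ->
  {ae mu, forall t, `|f t| <= `|g t|} -> X f /\ N f <= N g.
Proof. by case: hX => _ _ _ _ h; exact: h. Qed.

Lemma bis_ideal {f g} : measurable_fun setT f -> X g ->
  (forall t, `|f t| <= `|g t|) -> X f /\ N f <= N g.
Proof. by move=> mf Xg fg; apply: bis_ideal_ae => //; exact: aeW. Qed.

Lemma bis_norm_eq {f g} : measurable_fun setT f -> X g ->
  (forall t, `|f t| = `|g t|) -> N f = N g.
Proof.
move=> mf Xg fg.
have [Xf le_fg] := bis_ideal mf Xg (fun t => ltac:(by rewrite fg)).
have [_ le_gf] := bis_ideal (bis_measurable Xg) Xf (fun t => ltac:(by rewrite fg)).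
by apply/eqP; rewrite eq_le le_fg le_gf.
Qed.

Lemma bis_abs_on {B f} : measurable B -> X f -> X (abs_on B f) /\ N (abs_on B f) <= N f.
Proof.
move=> mB Xf; apply: bis_ideal (normr_abs_on_le B f) => //.
exact: measurable_abs_on (bis_measurable Xf).
Qed.

End BanachIdealSpace.

Lemma ler_of_cvg0 {R : realType} {c a : R} {u : nat -> R} :
  (forall n, c <= a + u n) -> u @ \oo --> 0 -> c <= a.
Proof.
move=> cau u0; have au : (fun n => a + u n) @ \oo --> a + 0.
  by apply: cvgD => //; exact: cvg_cst.
rewrite addr0 in au.
by apply: (closed_cvg _ (@closed_ge _ c) _ _ au); exact: nearW.
Qed.

Section OrderContinuousPart.
Context {d : measure_display} {T : measurableType d} {R : realType}
  {mu : {measure set T -> \bar R}} {X : set (T -> R)} {N : (T -> R) -> R}.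
Hypothesis hX : banach_ideal_space mu X N.
Local Notation Xa := (Xa mu X N).
Implicit Types (x y : T -> R).

Lemma Xa_le {x y} : Xa x -> measurable_fun setT y ->
  {ae mu, forall t, `|y t| <= `|x t|} -> Xa y.
Proof.
move=> [Xx ocx] my yx; split; first by have [] := bis_ideal_ae hX my Xx yx.
move=> u mu_ u_bnd u_decr u_cvg; apply: ocx => //.
apply: filterS2 u_bnd yx => t u_bnd yx n.
by have /andP[-> ut] := u_bnd n; exact: le_trans yx.
Qed.

Lemma Xa0 : Xa (fun _ => 0).
Proof.
split; first exact: bis_mem0 hX.
move=> u mu_ u_bnd _ _; suff -> : (fun n => N (u n)) = fun=> 0 by exact: cvg_cst.
apply/funext => n; have u0 : {ae mu, forall t, `|u n t| <= `|(0 : R)|}.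
  by apply: filterS u_bnd => t /(_ n) /andP[u0 ?]; rewrite ger0_norm.
have [Xu le0] := bis_ideal_ae hX (mu_ n) (bis_mem0 hX) u0.
by apply/eqP; rewrite eq_le (bis_norm_ge0 hX Xu) andbT -(bis_norm0 hX).
Qed.

Lemma Xa_dominated_cvg0 {x} {v : nat -> T -> R} : Xa x ->
  (forall n, measurable_fun setT (v n)) -> {ae mu, forall t n, 0 <= v n t <= `|x t|} ->
  {ae mu, forall t n, v n.+1 t <= v n t} -> {ae mu, forall t, v ^~ t @ \oo --> 0} ->
  (forall n, X (v n)) /\ (fun n => N (v n)) @ \oo --> 0.
Proof.
move=> [Xx ocx] mv v_bnd v_decr v_cvg; split; last exact: ocx.
move=> n; apply: (bis_ideal_ae hX (mv n) Xx _).1.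
by apply: filterS v_bnd => t /(_ n) /andP[v0 ?]; rewrite ger0_norm.
Qed.

Lemma XaD {x y} : Xa x -> Xa y -> Xa (x \+ y).
Proof.
move=> Xax Xay; split; first exact: (bis_memD hX Xax.1 Xay.1).
move=> u mu_ u_bnd u_decr u_cvg.
have mx := measurable_fun_normr (bis_measurable hX Xax.1).
pose a n t := Num.min (u n t) `|x t|.
pose b n t := Num.max (u n t - `|x t|) 0.
have u_ab n : u n = a n \+ b n.
  apply/funext => t; rewrite /a /b /=.
  by case: (leP (u n t) `|x t|); case: (leP (u n t - `|x t|) 0); lra.
have ma n : measurable_fun setT (a n) by exact: measurable_minr (mu_ n) mx.
have mb n : measurable_fun setT (b n).
  by apply: measurable_maxr (measurable_funB (mu_ n) mx) (measurable_cst _).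
have [Xan Na] : (forall n, X (a n)) /\ (fun n => N (a n)) @ \oo --> 0.
  apply: Xa_dominated_cvg0 Xax ma _ _ _.
  - apply: filterS u_bnd => t ut n; have /andP[u0 _] := ut n.
    by rewrite /a le_min u0 normr_ge0 /= ge_min lexx orbT.
  - apply: filterS u_decr => t ut n.
    by rewrite /a le_min !ge_min lexx orbT andbT ut.
  - apply: filterS2 u_bnd u_cvg => t ut ucv; apply: (squeeze0_cvgr _ ucv) => n.
    by have /andP[u0 _] := ut n; rewrite /a le_min u0 normr_ge0 /= ge_min lexx.
have [Xbn Nb] : (forall n, X (b n)) /\ (fun n => N (b n)) @ \oo --> 0.
  apply: Xa_dominated_cvg0 Xay mb _ _ _.
  - apply: filterS u_bnd => t ut n; have /andP[_ uxy] := ut n.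
    rewrite /b le_max lexx orbT /= ge_max normr_ge0 andbT.
    by have := ler_normD (x t) (y t); lra.
  - apply: filterS u_decr => t ut n.
    by rewrite /b ge_max !le_max lexx !orbT andbT lerD2r ut.
  - apply: filterS2 u_bnd u_cvg => t ut ucv; apply: (squeeze0_cvgr _ ucv) => n.
    have /andP[u0 _] := ut n; rewrite /b le_max lexx orbT /= ge_max u0 andbT.
    by have := normr_ge0 (x t); lra.
have Nab : (fun n => N (a n) + N (b n)) @ \oo --> 0 + 0 by exact: cvgD.
rewrite addr0 in Nab; apply: (squeeze0_cvgr _ Nab) => n /=.
by rewrite u_ab (bis_norm_ge0 hX (bis_memD hX (Xan n) (Xbn n))) (bis_normD hX).
Qed.

Lemma XaMn n {x} : Xa x -> Xa (fun t => n%:R * x t).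
Proof.
move=> Xax; have mx := bis_measurable hX Xax.1; elim: n => [|n IHn].
  by apply: Xa_le Xa0 (measurable_fun_scale _ mx) _; apply: aeW => t; rewrite mul0r.
suff -> : (fun t => n.+1%:R * x t) = (fun t => n%:R * x t) \+ x by exact: XaD.
by apply/funext => t; rewrite /= mulrSr mulrDl mul1r.
Qed.

End OrderContinuousPart.

Section Distance.
Context {d : measure_display} {T : measurableType d} {R : realType}
  {N : (T -> R) -> R} {f : T -> R} {M : set (T -> R)}.
Hypothesis N_ge0 : forall m, M m -> 0 <= N (f \- m).

Lemma distX_le {m} : M m -> distX N f M <= N (f \- m).
Proof.
by move=> Mm; apply: ge_inf; [exists 0 => _ [m' Mm' <-]; exact: N_ge0 | exists m].
Qed.

Lemma ge_distXP r : M !=set0 ->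
  r <= distX N f M <-> forall m, M m -> r <= N (f \- m).
Proof.
move=> [m0 Mm0]; split => [rd m Mm | rN]; first exact: le_trans rd (distX_le Mm).
by apply: lb_le_inf; [exists (N (f \- m0)), m0 | move=> _ [m Mm <-]; exact: rN].
Qed.

End Distance.

Section UnitSequences.
Context {R : realType}.

Definition unit_seq (k : nat) : nat -> R := fun n => (n == k)%:R.

Lemma linf_normE (a : nat -> R) (M : R) :
  (forall n, `|a n| <= M) -> (exists n, `|a n| = M) -> linf_norm a = M.
Proof.
move=> aM [n0 an0]; apply/eqP; rewrite eq_le; apply/andP; split.
  by apply: ge_sup; [exists `|a n0|, n0 | move=> _ [n _ <-]].
by rewrite -an0; apply: ub_le_sup; [exists M => _ [n _ <-] | exists n0].
Qed.

Lemma linf_cst (c : R) : linf (fun _ => c).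
Proof. by exists `|c|. Qed.

Lemma linf_norm1 : linf_norm (fun _ => 1 : R) = 1.
Proof. by apply: linf_normE => [n|]; [rewrite normr1 | exists 0%N; rewrite normr1]. Qed.

Lemma unit_seq_ge0 k n : 0 <= unit_seq k n.
Proof. exact: ler0n. Qed.

Lemma unit_seq_le1 k n : unit_seq k n <= 1.
Proof. by rewrite /unit_seq lern1 leq_b1. Qed.

Lemma linf_unit_seq k : linf (unit_seq k).
Proof. by exists 1 => n; rewrite ger0_norm ?unit_seq_ge0 ?unit_seq_le1. Qed.

Lemma linf_norm_unit_seq k : linf_norm (unit_seq k) = 1.
Proof.
apply: linf_normE => [n|]; first by rewrite ger0_norm ?unit_seq_ge0 ?unit_seq_le1.
by exists k; rewrite /unit_seq eqxx normr1.
Qed.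

Lemma min_unit_seq j k n : j != k -> Num.min (unit_seq j n) (unit_seq k n) = 0.
Proof.
move=> jk; rewrite /unit_seq; have [->|nj] := eqVneq n j.
  by rewrite (negbTE jk) min_r.
by rewrite min_l // ler_nat.
Qed.

End UnitSequences.

Section LatticeEmbedding.
Context {d : measure_display} {T : measurableType d} {R : realType}
  {mu : {measure set T -> \bar R}} {X : set (T -> R)} {N : (T -> R) -> R}
  {J : (nat -> R) -> T -> R}.
Hypothesis hJ : lattice_isometric_embedding mu X N J.

Lemma lattice_embedding0 : {ae mu, forall t, J (fun _ => 0) t = 0}.
Proof.
have [_ Jlin _ _ _] := hJ; apply: filterS (Jlin 1 _ _ (linf_cst 0) (linf_cst 0)) => t.
suff -> : (fun _ : nat => 1 * 0 + 0) = (fun _ => 0 : R) by rewrite mul1r; lra.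
by apply/funext => n; rewrite mul1r addr0.
Qed.

Lemma lattice_embedding_le {a b} : linf a -> linf b -> (forall n, a n <= b n) ->
  {ae mu, forall t, J a t <= J b t}.
Proof.
move=> la lb ab; have [_ _ _ Jmax _] := hJ; apply: filterS (Jmax a b la lb) => t.
suff -> : (fun n => Num.max (a n) (b n)) = b by move->; rewrite le_max lexx.
by apply/funext => n; rewrite max_r.
Qed.

Lemma lattice_embedding_ge0 {a} : linf a -> (forall n, 0 <= a n) ->
  {ae mu, forall t, 0 <= J a t}.
Proof.
move=> la a0; apply: filterS2 lattice_embedding0 (lattice_embedding_le (linf_cst 0) la a0).
by move=> t ->.
Qed.

Lemma lattice_embedding_min0 {a b} : linf a -> linf b ->
  (forall n, Num.min (a n) (b n) = 0) -> {ae mu, forall t, Num.min (J a t) (J b t) = 0}.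
Proof.
move=> la lb ab; have [_ _ _ _ Jmin] := hJ.
apply: filterS2 (Jmin a b la lb) lattice_embedding0 => t.
by rewrite (_ : (fun n => Num.min (a n) (b n)) = fun=> 0) //; [move=> <- | apply/funext].
Qed.

End LatticeEmbedding.

Section DisjointNormalizedSequence.
Context {d : measure_display} {T : measurableType d} {R : realType}
  {mu : {measure set T -> \bar R}} {X : set (T -> R)} {N : (T -> R) -> R}.
Hypothesis hX : banach_ideal_space mu X N.
Variables (f : T -> R) (e : nat -> T -> R).
Hypotheses (Xf : X f) (Xe : forall k, X (e k)) (Ne1 : forall k, N (e k) = 1).
Hypothesis e_ge0 : {ae mu, forall t k, 0 <= e k t}.
Hypothesis e_le : {ae mu, forall t k, e k t <= f t}.
Hypothesis e_disj : {ae mu, forall t j k, j != k -> Num.min (e j t) (e k t) = 0}.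

Let tail n := [set t | exists2 k, (n <= k)%N & 0 < e k t].

Let measurable_tail n : measurable (tail n).
Proof.
suff -> : tail n = \bigcup_(k in [set k | (n <= k)%N]) [set t | 0 < e k t].
  by apply: bigcup_measurable => k _; exact: measurable_gt0 (bis_measurable hX (Xe k)).
by apply/seteqP; split => t [k nk ekt]; exists k.
Qed.

Lemma tail_norm_cvg0 {g} : Xa mu X N g -> (fun n => N (abs_on (tail n) g)) @ \oo --> 0.
Proof.
move=> [Xg ocg]; apply: ocg.
- by move=> n; exact: measurable_abs_on (measurable_tail n) (bis_measurable hX Xg).
- by apply: aeW => t n; rewrite abs_on_ge0 abs_on_le.
- apply: aeW => t n; have [tSn|tSn] := pselect (tail n.+1 t).
    rewrite !abs_on_in //; case: tSn => k nk ekt; exists k => //; exact: ltnW.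
  by rewrite abs_on_notin // abs_on_ge0.
apply: filterS e_disj => t disj; have [[k ekt]|nek] := pselect (exists k, 0 < e k t).
  apply: cvg_near_cst; exists k.+1 => // n /= kn; rewrite abs_on_notin // => -[k' nk' ek't].
  have k'k : k' != k by apply: contraTneq kn => <-; rewrite -leqNgt.
  by have := disj _ _ k'k; apply/eqP; rewrite gt_eqF // lt_min ek't.
apply: cvg_near_cst; apply: nearW => n.
by rewrite abs_on_notin // => -[k _ ekt]; apply: nek; exists k.
Qed.

Lemma le_norm_sub_Xa g : Xa mu X N g -> 1 <= N (f \- g).
Proof.
move=> Xag; apply: (ler_of_cvg0 _ (tail_norm_cvg0 Xag)) => n.
have Xfg := bis_memB hX Xf Xag.1.
set u := abs_on (tail n) g; have [Xu _] := bis_abs_on hX (measurable_tail n) Xag.1.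
pose h := (fun t => `|(f \- g) t|) \+ u.
have [X_fg N_fg] : X (fun t => `|(f \- g) t|) /\ N (fun t => `|(f \- g) t|) = N (f \- g).
  have m_fg := measurable_fun_normr (bis_measurable hX Xfg).
  split; first by apply: (bis_ideal hX m_fg Xfg _).1 => t; rewrite normr_id.
  exact: (bis_norm_eq hX m_fg Xfg (fun t => normr_id _)).
(* On the support of [e n], [u] is [|g|], and [e n <= f <= |f - g| + |g|]. *)
have en_h : {ae mu, forall t, `|e n t| <= `|h t|}.
  apply: filterS2 e_ge0 e_le => t e0 ef; rewrite (ger0_norm (e0 n)) ger0_norm; last first.
    by rewrite addr_ge0 ?abs_on_ge0.
  rewrite /h /u /=; have [ent|en0] := ltP 0 (e n t); last first.
    by have := abs_on_ge0 (tail n) g t; have := normr_ge0 (f t - g t); lra.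
  rewrite abs_on_in; last by exists n.
  by have := ef n; have := ler_norm (f t - g t); have := ler_norm (g t); lra.
have [_ Nen] := bis_ideal_ae hX (bis_measurable hX (Xe n)) (bis_memD hX X_fg Xu) en_h.
by rewrite -(Ne1 n) -N_fg; exact: le_trans Nen (bis_normD hX X_fg Xu).
Qed.

End DisjointNormalizedSequence.

Lemma contains_linf_norm_dist_Xa {d : measure_display} {T : measurableType d}
    {R : realType} {mu : {measure set T -> \bar R}} {X : set (T -> R)}
    {N : (T -> R) -> R} :
  banach_ideal_space mu X N -> contains_lattice_isometric_linf mu X N ->
  exists f, X f /\ N f = 1 /\ distX N f (Xa mu X N) = 1.
Proof.
move=> hX [J hJ]; have [JX _ Jnorm _ _] := hJ.
pose f := J (fun _ => 1); pose e k := J (unit_seq k).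
have Xf : X f := JX _ (linf_cst 1).
have Nf : N f = 1 by rewrite /f Jnorm ?linf_norm1 //; exact: linf_cst.
have N_ge0 m : Xa mu X N m -> 0 <= N (f \- m).
  by move=> Xam; exact: (bis_norm_ge0 hX (bis_memB hX Xf Xam.1)).
exists f; do 2!split => //; apply/eqP; rewrite eq_le; apply/andP; split.
  have := distX_le N_ge0 (Xa0 hX); rewrite (_ : f \- _ = f) ?Nf //.
  by apply/funext => t /=; rewrite subr0.
apply/(ge_distXP N_ge0); first by exists (fun _ => 0); exact: Xa0.
move=> g; apply: (le_norm_sub_Xa hX f e Xf).
- by move=> k; exact: JX (linf_unit_seq k).
- by move=> k; rewrite Jnorm ?linf_norm_unit_seq //; exact: linf_unit_seq.
- apply: ae_foralln => k.
  exact: (lattice_embedding_ge0 hJ (linf_unit_seq k) (unit_seq_ge0 k)).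
- apply: ae_foralln => k.
  exact: (lattice_embedding_le hJ (linf_unit_seq k) (linf_cst 1) (unit_seq_le1 k)).
- apply: ae_foralln => j; apply: ae_foralln => k.
  have [->|jk] := eqVneq j k; first exact: aeW.
  apply: filterS (lattice_embedding_min0 hJ (linf_unit_seq j) (linf_unit_seq k) _).
    by move=> t ->.
  by move=> n; exact: min_unit_seq.
Qed.

Section EssentialUnion.
Context {d : measure_display} {T : measurableType d} {R : realType}
  {mu : {measure set T -> \bar R}} {P : set (set T)}.
Hypotheses (P_measurable : forall B, P B -> measurable B) (P0 : P set0)
  (PU : forall B C, P B -> P C -> P (B `|` C)).

Lemma ess_union_finite {F} : measurable F -> (mu F < +oo)%E ->
  exists B : nat -> set T, (forall n, P (B n)) /\
    forall V, P V -> mu (F `&` V `\` \bigcup_n B n) = 0%E.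
Proof.
move=> mF Ffin; pose s := ereal_sup [set mu (B `&` F) | B in P].
have s_ub B : P B -> (mu (B `&` F) <= s)%E by move=> PB; apply: ereal_sup_ubound; exists B.
have s_fin : s \is a fin_num.
  rewrite ge0_fin_numE; last by apply: le_trans (s_ub _ P0); rewrite set0I measure0.
  apply: le_lt_trans Ffin; apply: ge_ereal_sup => _ [B PB <-].
  by apply: le_measure; rewrite ?inE //; exact: measurableI _ _ (P_measurable _ PB) mF.
have near_s n : exists B, P B /\ (s - (harmonic n)%:E < mu (B `&` F))%E.
  have : (s - (harmonic n)%:E < s)%E.
    by rewrite -(fineK s_fin) -EFinB lte_fin gtrDl oppr_lt0 harmonic_gt0.
  by move/ereal_sup_gt => [_ [B PB <-] sB]; exists B.
have [B BP] := choice near_s; exists B; split=> [n|V PV]; first exact: (BP n).1.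
(* [W] misses every [B n], so [B n `|` V] exceeds [B n] by at least [mu W] inside [F];
   hence [mu W <= harmonic n] for all [n]. *)
set W := _ `\` _; have mV := P_measurable _ PV.
have mB n : measurable (B n) := P_measurable _ (BP n).1.
have mW : measurable W := measurableD (measurableI _ _ mF mV) (bigcupT_measurable _ mB).
have fin_le A : measurable A -> A `<=` F -> mu A \is a fin_num.
  move=> mA AF; rewrite ge0_fin_numE ?measure_ge0 //.
  by apply: le_lt_trans Ffin; apply: le_measure; rewrite ?inE.
have W_fin : mu W \is a fin_num by apply: (fin_le _ mW) => t [[]].
have BF_fin n : mu (B n `&` F) \is a fin_num.
  by apply: fin_le; [exact: measurableI | exact: subIsetr].
have BW_le n : (mu (B n `&` F) + mu W <= s)%E.
  rewrite -measureU //; first last.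
  - by apply/seteqP; split => // t [[Bt _] [_ nB]]; apply: nB; exists n.
  - exact: measurableI.
  apply: (le_trans _ (s_ub _ (PU _ _ (BP n).1 PV))); apply: le_measure; rewrite ?inE.
  - exact: measurableU _ _ (measurableI _ _ (mB n) mF) mW.
  - exact: measurableI _ _ (measurableU _ _ (mB n) mV) mF.
  - by move=> t [[Bt Ft] | [[Ft Vt] _]]; split => //; [left | right].
rewrite -(fineK W_fin); congr EFin; apply/eqP; rewrite eq_le fine_ge0 ?measure_ge0 // andbT.
apply: (ler_of_cvg0 _ (@cvg_harmonic R)) => n; rewrite add0r.
have := (BP n).2; have := BW_le n.
rewrite -(fineK s_fin) -(fineK W_fin) -(fineK (BF_fin n)) -EFinD -EFinB lee_fin lte_fin.
by lra.
Qed.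

Lemma ess_union : sigma_finite setT mu ->
  exists G : nat -> set T, (forall i, P (G i)) /\
    forall V, P V -> mu.-negligible (V `\` \bigcup_i G i).
Proof.
case=> F FT Ffin; have [B BP] := choice (fun j => ess_union_finite (Ffin j).1 (Ffin j).2).
pose G i := if @unpickle (nat * nat)%type i is Some (j, n) then B j n else set0.
exists G; split=> [i|V PV]; first by rewrite /G; case: unpickle => [[j n]|] //; exact: (BP j).1.
apply: (negligibleS (A := \bigcup_j (F j `&` V `\` \bigcup_n B j n))).
  move=> t [Vt nGt]; have : [set: T] t by []; rewrite FT => -[j _ Fjt].
  exists j => //; split => // -[n _ Bt]; apply: nGt; exists (pickle (j, n)) => //.
  by rewrite /G pickleK.
apply: negligible_bigcup => j; apply/negligibleP; last exact: (BP j).2.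
apply: measurableD; first exact: measurableI _ _ (Ffin j).1 (P_measurable _ PV).
exact: bigcupT_measurable _ (fun n => P_measurable _ ((BP j).1 n)).
Qed.

End EssentialUnion.

Lemma ae_notin_negligible {d : measure_display} {T : measurableType d} {R : realType}
    {mu : {measure set T -> \bar R}} {A : set T} :
  mu.-negligible A -> {ae mu, forall t, ~ A t}.
Proof. by move=> nA; apply: negligibleS nA => t /= /contrapT. Qed.

Lemma same_support_vanish {d : measure_display} {T : measurableType d}
    {R : realType} {mu : {measure set T -> \bar R}} {Y1 Y2 : set (T -> R)}
    {B : set T} :
  same_support mu Y1 Y2 -> measurable B ->
  (forall g, Y1 g -> {ae mu, forall t, ~ B t -> g t = 0}) ->
  forall f, Y2 f -> {ae mu, forall t, ~ B t -> f t = 0}.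
Proof.
move=> [A [[mA _ A_min] [_ Y2A _]]] mB Y1B f Y2f.
have nAB : mu.-negligible (A `\` B).
  by apply/negligibleP; [exact: measurableD | exact: A_min].
apply: filterS2 (Y2A f Y2f) (ae_notin_negligible nAB) => t fA ABt nBt.
by apply: fA => At; apply: ABt.
Qed.

Definition oc_set {d : measure_display} {T : measurableType d} {R : realType}
    (mu : {measure set T -> \bar R}) (X : set (T -> R)) (N : (T -> R) -> R)
    (f : T -> R) (B : set T) :=
  measurable B /\ Xa mu X N (abs_on B f).

Section OrderContinuousSets.
Context {d : measure_display} {T : measurableType d} {R : realType}
  {mu : {measure set T -> \bar R}} {X : set (T -> R)} {N : (T -> R) -> R}.
Hypothesis hX : banach_ideal_space mu X N.
Variables (f : T -> R) (Xf : X f).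
Local Notation oc_set := (oc_set mu X N f).

Lemma oc_set0 : oc_set set0.
Proof.
split => //; apply: (Xa_le hX (Xa0 hX) (measurable_abs_on measurable0 (bis_measurable hX Xf))).
by apply: aeW => t; rewrite abs_on_notin // normr0.
Qed.

Lemma oc_setU B C : oc_set B -> oc_set C -> oc_set (B `|` C).
Proof.
move=> [mB XaB] [mC XaC]; split; first exact: measurableU.
apply: (Xa_le hX (XaD hX XaB XaC)).
  exact: measurable_abs_on (measurableU _ _ mB mC) (bis_measurable hX Xf).
apply: aeW => t /=; rewrite ger0_norm ?abs_on_ge0 // ger0_norm ?addr_ge0 ?abs_on_ge0 //.
have [Bt|nBt] := pselect (B t).
  rewrite (abs_on_in (B `|` C)) ?(abs_on_in B) //; last by left.
  by have := abs_on_ge0 C f t; lra.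
rewrite (abs_on_notin B) // add0r; have [Ct|nCt] := pselect (C t).
  by rewrite !abs_on_in //; right.
by rewrite !abs_on_notin // => -[].
Qed.

Hypothesis mu_sigma : sigma_finite setT mu.
Hypothesis hsupp : same_support mu (Xa mu X N) X.

Lemma oc_set_exhaustion : exists G : nat -> set T, (forall i, oc_set (G i)) /\
  {ae mu, forall t, ~ (\bigcup_i G i) t -> f t = 0}.
Proof.
have [G [oG Gnull]] := ess_union (fun B (oB : oc_set B) => oB.1) oc_set0 oc_setU mu_sigma.
exists G; split => //; set U := \bigcup_i G i.
have mU : measurable U by apply: bigcupT_measurable => i; exact: (oG i).1.
apply: (same_support_vanish hsupp mU) => // g Xag.
have mg := bis_measurable hX Xag.1.
pose V m := [set t | `|f t| <= m%:R * `|g t|].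
have oV m : oc_set (V m).
  have mV : measurable (V m).
    exact: measurable_le (measurable_fun_normr (bis_measurable hX Xf))
                         (measurable_fun_scale _ (measurable_fun_normr mg)).
  split => //; apply: (Xa_le hX (XaMn hX m Xag) (measurable_abs_on mV (bis_measurable hX Xf))).
  apply: aeW => t; have [Vt|nVt] := pselect (V m t); last by rewrite abs_on_notin ?normr0.
  by rewrite abs_on_in // normr_id normrM (ger0_norm (ler0n _ _)).
apply: filterS (ae_notin_negligible (negligible_bigcup (fun m => Gnull _ (oV m)))).
move=> t nVU nUt; apply/eqP; apply: contraPT nVU => gt0.
have gt_pos : 0 < `|g t| by rewrite normr_gt0.
apply; exists (Num.truncn (`|f t| / `|g t|)).+1 => //; split => //.
by rewrite /V /= -ler_pdivrMr //; apply: ltW; exact: truncnS_gt.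
Qed.

Lemma oc_set_increasing_exhaustion : exists C : nat -> set T,
  [/\ forall m, oc_set (C m), {homo C : m n / (m <= n)%N >-> m `<=` n} &
      {ae mu, forall t, ~ (\bigcup_n C n) t -> f t = 0}].
Proof.
have [G [oG G_f]] := oc_set_exhaustion.
exists (fun m => [set t | exists2 i, (i <= m)%N & G i t]); split.
- elim=> [|m IHm].
    by rewrite (_ : [set t | _] = G 0%N) //; apply/seteqP; split => t; [case=> -[] | exists 0%N].
  rewrite (_ : [set t | _] = [set t | exists2 i, (i <= m)%N & G i t] `|` G m.+1).
    exact: oc_setU IHm (oG _).
  apply/seteqP; split => t; last first.
    by case=> [[i im Git]|Gt]; [exists i => //; exact: leqW | exists m.+1].
  by case=> i; rewrite leq_eqVlt => /orP[/eqP-> | im Git]; [right | left; exists i].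
- by move=> m n mn t [i im Git]; exists i => //; exact: leq_trans mn.
apply: filterS G_f => t Gf nCt; apply: Gf => -[i _ Git].
by apply: nCt; exists i => //; exists i.
Qed.

End OrderContinuousSets.

Lemma logn2_pow2_mul_odd k M : logn 2 (2 ^ k * M.*2.+1) = k.
Proof.
rewrite lognM ?expn_gt0 // pfactorK // logn_coprime ?addn0 //.
by rewrite coprime2n /= odd_double.
Qed.

Lemma leq_pow2_mul_odd k M : (M <= 2 ^ k * M.*2.+1)%N.
Proof. by have := expn_gt0 2 k; rewrite -addnn; nia. Qed.

Lemma harmonic_le {R : realType} {m n : nat} : (m <= n)%N -> harmonic n <= harmonic m :> R.
Proof. by move=> mn; rewrite /= lef_pV2 ?posrE ?ltr0Sn // ler_nat ltnS. Qed.

Lemma linf_norm_ub {R : realType} {a : nat -> R} n : linf a -> `|a n| <= linf_norm a.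
Proof.
by move=> [C aC]; apply: ub_le_sup; [exists C => _ [m _ <-] | exists n].
Qed.

Section EmbeddingFromBlocks.
Context {d : measure_display} {T : measurableType d} {R : realType}
  {mu : {measure set T -> \bar R}} {X : set (T -> R)} {N : (T -> R) -> R}.
Hypothesis hX : banach_ideal_space mu X N.
Variables (f : T -> R) (P : nat -> set T).
Hypotheses (Xf : X f) (Nf : N f = 1) (mP : forall i, measurable (P i))
  (P_disj : forall i j t, P i t -> P j t -> i = j)
  (P_norm : forall i, 1 - harmonic i < N (abs_on (P i) f)).

Let Q := \bigcup_i P i.
Let block t := xget 0%N [set i | P i t].

Let blockE {i t} : P i t -> block t = i.
Proof. by move=> Pit; apply: xget_unique => // j Pjt; exact: P_disj Pjt Pit. Qed.

Let block_notin t : ~ Q t -> block t = 0%N.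
Proof. by move=> nQt; apply: xgetPN => i Pit; apply: nQt; exists i. Qed.

Let measurable_fun_block (h : nat -> R) : measurable_fun setT (fun t => h (block t)).
Proof.
move=> _ Y mY; rewrite setTI.
suff -> : (fun t => h (block t)) @^-1` Y =
    \bigcup_(i in [set i | Y (h i)]) P i `|` (~` Q `&` [set _ | Y (h 0%N)]).
  apply: measurableU; first by apply: bigcup_measurable => i _; exact: mP.
  apply: measurableI; first exact/measurableC/bigcupT_measurable.
  have [Y0|nY0] := pselect (Y (h 0%N)).
    by rewrite (_ : [set _ | _] = setT) //; apply/seteqP; split.
  by rewrite (_ : [set _ | _] = set0) //; apply/seteqP; split.
apply/seteqP; split => t /=.
  have [[i _ Pit]|nQt] := pselect (Q t); first by rewrite (blockE Pit) => Yi; left; exists i.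
  by rewrite block_notin // => Y0; right.
by case=> [[i Yi Pit]|[nQt Y0]]; [rewrite (blockE Pit) | rewrite block_notin].
Qed.

(* Block [i] carries coordinate [logn 2 i]: each coordinate is carried by
   infinitely many blocks, whose norms tend to 1. *)
Let J (a : nat -> R) : T -> R := fun t => a (logn 2 (block t)) * abs_on Q f t.

Let measurable_J a : measurable_fun setT (J a).
Proof.
apply: measurable_funM; first exact: (measurable_fun_block (fun i => a (logn 2 i))).
exact: measurable_abs_on (bigcupT_measurable _ mP) (bis_measurable hX Xf).
Qed.

Let J_bounded {a} : linf a -> X (J a) /\ N (J a) <= linf_norm a.
Proof.
move=> la; have a0 : 0 <= linf_norm a := le_trans (normr_ge0 _) (linf_norm_ub 0 la).
rewrite -[linf_norm a]mulr1 -Nf -(ger0_norm a0) -(bis_normZ hX _ Xf).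
apply: (bis_ideal hX (measurable_J a) (bis_memZ hX _ Xf)) => t.
rewrite /J normrM (ger0_norm (abs_on_ge0 _ _ _)) normrM (ger0_norm a0).
by apply: ler_pM => //; [exact: abs_on_ge0 | exact: linf_norm_ub | exact: abs_on_le].
Qed.

Let norm_J a : linf a -> N (J a) = linf_norm a.
Proof.
move=> la; have [XJ NJ] := J_bounded la; apply/eqP; rewrite eq_le NJ /=.
apply: ge_sup; first by exists `|a 0%N|, 0%N.
move=> _ [k _ <-]; apply: (ler_of_cvg0 (u := fun M => `|a k| * harmonic M)).
  move=> M; pose i := (2 ^ k * M.*2.+1)%N.
  have [XPi _] := bis_abs_on hX (mP i) Xf.
  have [_ le_J] : X (fun t => `|a k| * abs_on (P i) f t) /\
      N (fun t => `|a k| * abs_on (P i) f t) <= N (J a).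
    have mPi := measurable_abs_on (mP i) (bis_measurable hX Xf).
    apply: (bis_ideal hX (measurable_fun_scale _ mPi) XJ).
    move=> t; have [Pit|nPit] := pselect (P i t); last by rewrite abs_on_notin ?mulr0 ?normr0.
    rewrite /J (blockE Pit) logn2_pow2_mul_odd !abs_on_in //; last by exists i.
    by rewrite !normrM normr_id.
  move: le_J; rewrite (bis_normZ hX _ XPi) normr_id.
  have := P_norm i; have := harmonic_le (leq_pow2_mul_odd k M) (R := R).
  have := normr_ge0 (a k); rewrite -/i => ? ? ? ?; nra.
by rewrite -(mulr0 `|a k|); apply: cvgM => //; [exact: cvg_cst | exact: cvg_harmonic].
Qed.

Lemma embedding_from_blocks : contains_lattice_isometric_linf mu X N.
Proof.
exists J; split.
- by move=> a la; have [] := J_bounded la.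
- by move=> c a b la lb; apply: aeW => t; rewrite /J mulrDl mulrA.
- exact: norm_J.
- by move=> a b la lb; apply: aeW => t; rewrite /J maxr_pMl // abs_on_ge0.
- by move=> a b la lb; apply: aeW => t; rewrite /J minr_pMl // abs_on_ge0.
Qed.

End EmbeddingFromBlocks.

Section DistanceOne.
Context {d : measure_display} {T : measurableType d} {R : realType}
  {mu : {measure set T -> \bar R}} {X : set (T -> R)} {N : (T -> R) -> R}.
Hypothesis hX : banach_ideal_space mu X N.
Variable f : T -> R.
Hypotheses (Xf : X f) (Nf : N f = 1) (f_dist : distX N f (Xa mu X N) = 1).

(* [|f| 1_(~` B) = |f - 1_B f|] with [1_B f] in [X_a]. *)
Lemma norm_abs_on_compl {B} : oc_set mu X N f B -> N (abs_on (~` B) f) = 1.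
Proof.
move=> [mB XaB]; have mf := bis_measurable hX Xf.
have [_ le_f] := bis_abs_on hX (measurableC mB) Xf.
apply/eqP; rewrite eq_le -{1}Nf le_f /=.
pose m t := \1_B t * f t.
have mm : measurable_fun setT m by apply: measurable_funM => //; exact: measurable_indic.
have Xam : Xa mu X N m.
  apply: (Xa_le hX XaB mm).
  by apply: aeW => t; rewrite /m /abs_on !normrM normr_id.
have N_ge0 g : Xa mu X N g -> 0 <= N (f \- g).
  by move=> Xag; exact: (bis_norm_ge0 hX (bis_memB hX Xf Xag.1)).
have [dist_le _] := ge_distXP N_ge0 1 (ex_intro _ _ (Xa0 hX)).
rewrite (bis_norm_eq hX (measurable_abs_on (measurableC mB) mf) (bis_memB hX Xf Xam.1)).
  by apply: (dist_le _ m Xam); rewrite f_dist.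
move=> t; rewrite /m /=; have [Bt|nBt] := pselect (B t).
  by rewrite abs_on_notin ?indic_in1 // mul1r subrr normr0.
by rewrite abs_on_in // indic_notin0 // mul0r subr0 normr_id.
Qed.

End DistanceOne.

Section IncreasingExhaustion.
Context {d : measure_display} {T : measurableType d} {R : realType}
  {mu : {measure set T -> \bar R}} {X : set (T -> R)} {N : (T -> R) -> R}.
Hypotheses (hX : banach_ideal_space mu X N) (hfatou : semi_fatou mu X N).
Variables (f : T -> R) (C : nat -> set T).
Hypotheses (Xf : X f) (mC : forall n, measurable (C n))
  (C_mono : {homo C : m n / (m <= n)%N >-> m `<=` n})
  (f_vanish : {ae mu, forall t, ~ (\bigcup_n C n) t -> f t = 0}).

Lemma norm_abs_on_annulus_cvg p :
  (fun k => N (abs_on (C (p + k) `\` C p) f)) @ \oo --> N (abs_on (~` C p) f).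
Proof.
apply: hfatou.
- by move=> k; exact: (bis_abs_on hX (measurableD (mC _) (mC p)) Xf).1.
- exact: (bis_abs_on hX (measurableC (mC p)) Xf).1.
- apply: aeW => t k; rewrite abs_on_ge0 /=.
  have [[Ct nCt]|nD] := pselect ((C (p + k) `\` C p) t); last by rewrite abs_on_notin ?abs_on_ge0.
  by rewrite !abs_on_in //; split => //; apply: C_mono Ct; rewrite leq_add2l.
apply: filterS f_vanish => t ft; have [Cpt|nCpt] := pselect (C p t).
  by apply: cvg_near_cst; apply: nearW => k; rewrite !abs_on_notin // => -[].
have [[i _ Cit]|nCt] := pselect ((\bigcup_n C n) t); last first.
  apply: cvg_near_cst; apply: nearW => k.
  by rewrite /abs_on ft // normr0 !mulr0.
apply: cvg_near_cst; exists i => // k /= ik; rewrite !abs_on_in //; split => //.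
by apply: C_mono Cit; exact: leq_trans ik (leq_addl p k).
Qed.

Lemma disjoint_blocks : (forall p, N (abs_on (~` C p) f) = 1) ->
  exists P : nat -> set T, [/\ forall i, measurable (P i),
    forall i j t, P i t -> P j t -> i = j &
    forall i, 1 - harmonic i < N (abs_on (P i) f)].
Proof.
move=> C_norm1.
have next_block p i : exists q, (p <= q)%N /\ 1 - harmonic i < N (abs_on (C q `\` C p) f).
  have : \forall k \near \oo, 1 - harmonic i < N (abs_on (C (p + k) `\` C p) f).
    by apply: (cvgr_gt _ (norm_abs_on_annulus_cvg p)); rewrite C_norm1 gtrBl harmonic_gt0.
  case=> M _ hM.
  by exists (p + M)%N; split; [exact: leq_addr | exact: hM M (leqnn M)].
have [next next_spec] := choice (fun pi : (nat * nat)%type => next_block pi.1 pi.2).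
pose ms := fix ms i := if i is i'.+1 then next (ms i', i') else 0%N.
have ms_mono : {homo ms : i j / (i <= j)%N}.
  apply: homo_leq; [exact: leqnn | exact: leq_trans | move=> i].
  exact: (next_spec (ms i, i)).1.
exists (fun i => C (ms i.+1) `\` C (ms i)); split.
- by move=> i; exact: measurableD.
- move=> i j t [Ci nCi] [Cj nCj]; apply/eqP; case: (ltngtP i j) => // ij; exfalso.
    by apply: nCj; apply: C_mono Ci; exact: ms_mono.
  by apply: nCi; apply: C_mono Cj; exact: ms_mono.
- by move=> i; exact: (next_spec (ms i, i)).2.
Qed.

End IncreasingExhaustion.

Lemma norm_dist_Xa_contains_linf {d : measure_display} {T : measurableType d}
    {R : realType} {mu : {measure set T -> \bar R}} {X : set (T -> R)}
    {N : (T -> R) -> R} :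
  banach_ideal_space mu X N -> sigma_finite setT mu -> semi_fatou mu X N ->
  same_support mu (Xa mu X N) X ->
  (exists f, X f /\ N f = 1 /\ distX N f (Xa mu X N) = 1) ->
  contains_lattice_isometric_linf mu X N.
Proof.
move=> hX mu_sigma hfatou hsupp [f [Xf [Nf f_dist]]].
have [C [oC C_mono f_vanish]] := oc_set_increasing_exhaustion hX f Xf mu_sigma hsupp.
have [P [mP P_disj P_norm]] :=
  disjoint_blocks hX hfatou f C Xf (fun m => (oC m).1) C_mono f_vanish
    (fun p => norm_abs_on_compl hX f Xf Nf f_dist (oC p)).
exact: embedding_from_blocks hX f P Xf Nf mP P_disj P_norm.
Qed.

Theorem theorem2p1 (d : measure_display) (T : measurableType d) (R : realType)
  (mu : {measure set T -> \bar R})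
  (mu_sigma : sigma_finite setT mu) (mu_complete : measure_is_complete mu)
  (X : set (T -> R)) (N : (T -> R) -> R)
  (hX : banach_ideal_space mu X N)
  (hfatou : semi_fatou mu X N)
  (hsupp : same_support mu (Xa mu X N) X) :
  contains_lattice_isometric_linf mu X N <->
  exists f, X f /\ N f = 1 /\ distX N f (Xa mu X N) = 1.
Proof.
split; first exact: contains_linf_norm_dist_Xa.
exact: norm_dist_Xa_contains_linf.
Qed.
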